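(* Let $n\ge2$. (i) For every $\delta>0$, \[ \lim_{\substack{x\to\infty\\ \{\log_2(\gamma_n x)\}\ge\delta}}\ \mathbb{P}\Big\{\frac{S_n}{n}>x\Big\}\,x\,2^{-\{\log_2(\gamma_n x)\}}=1 . \] (ii) For every $c>1$, \[ \lim_{m\to\infty}\ \sup_{\frac{2^m}{\gamma_n}+c\le x<\frac{2^{m+1}}{\gamma_n}}\ \mathbb{P}\Big\{\frac{S_n}{n}>x\Big\}\,x\,2^{-\{\log_2(\gamma_n x)\}}=1+\mathbb{P}\{S_{n-1}>nc\}>1 . \]
   Context: $X_1,X_2,\ldots$ are iid St.~Petersburg random variables: $\mathbb{P}\{X_i=2^k\}=2^{-k}$, $k\in\{1,2,\ldots\}$; $S_n=X_1+\dots+X_n$; $\gamma_n=n/2^{\lceil\log_2 n\rceil}$; $\{y\}$ denotes the fractional part of $y$. In (ii), $m$ runs over the positive integers. *)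

From Stdlib Require Import Reals Lra Lia ZArith Arith.
Open Scope R_scope.

(* Distribution function of S_n = X_1 + ... + X_n, X_i iid St. Petersburg:
   P{X = 2^k} = 2^{-k}, k >= 1.  The law of S_{n+1} is the convolution of
   the law of S_n with that of X:
     P{S_{n+1} <= t} = sum_{k>=1} 2^{-k} P{S_n <= t - 2^k}.
   Since S_n >= 0, only k with 2^k <= t contribute; every k >= up t
   satisfies 2^k > t, so the series is the finite sum over
   k = 1 .. Z.to_nat (up t) + 1 (extra terms are 0). *)
Fixpoint cdf_S (n : nat) (t : R) : R :=
  match n with
  | O => if Rle_dec 0 t then 1 else 0
  | S n' => sum_f_R0 (fun i => (/ 2) ^ (S i) * cdf_S n' (t - 2 ^ (S i)))
                     (Z.to_nat (up t))
  end.

Definition tail_S (n : nat) (t : R) : R := 1 - cdf_S n t.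

Definition log2 (y : R) : R := ln y / ln 2.

Definition gamma_n (n : nat) : R := INR n / 2 ^ (Nat.log2_up n).

Definition fr (n : nat) (x : R) : R := frac_part (log2 (gamma_n n * x)).

Definition normed_tail (n : nat) (x : R) : R :=
  tail_S n (INR n * x) * x * Rpower 2 (- fr n x).

(* Write n = gamma_n 2^L with L = ceil(log2 n) and put gamma_n x in a dyadic
   block 2^M <= gamma_n x < 2^(M+1); then n x = 2^(M+L) + r with residual
   0 <= r < 2^(M+L).  The heart of the proof is a one-big-jump expansion,
   proved by induction on the number of summands from the renewal equation
   [tail_rec]:
       P{S_(m+1) > 2^K + r} = (m+1) 2^-K (1 + P{S_m > r}) + O(4^-K).
   Since x 2^-{log2(gamma_n x)} = 2^M / gamma_n on the block, this yields
       normed_tail n x = 1 + P{S_(n-1) > r} + O(2^-M)   [normed_tail_expansion].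
   Part (i): keeping {log2(gamma_n x)} >= delta forces r >= 2^M (2^delta - 1),
   so P{S_(n-1) > r} -> 0 by a geometric tail bound.  Part (ii): on the shifted
   block the residual is r = n (x - 2^M/gamma_n) >= n c, with equality at the
   left end point, so by monotonicity the supremum tends to 1 + P{S_(n-1) > n c},
   which exceeds 1 because the tail of a nontrivial sum is positive. *)

From Stdlib Require Import Reals Lra Lia ZArith.
Open Scope R_scope.

(** Finite sums with [k] terms, [ssum f k = f 0 + ... + f (k-1)]; unlike
    [sum_f_R0] they allow the empty sum, which the truncated convolution
    formula for the tail needs. *)
Fixpoint ssum (f : nat -> R) (k : nat) : R :=
  match k with O => 0 | S p => ssum f p + f p end.

Lemma ssum_ext f g k : (forall i, (i < k)%nat -> f i = g i) -> ssum f k = ssum g k.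
Proof.
  induction k as [|k IH]; simpl; intros H; auto.
  rewrite IH by (intros; apply H; lia). rewrite H by lia. reflexivity.
Qed.

Lemma ssum_le f g k : (forall i, (i < k)%nat -> f i <= g i) -> ssum f k <= ssum g k.
Proof.
  induction k as [|k IH]; simpl; intros H; [lra|].
  assert (ssum f k <= ssum g k) by (apply IH; intros; apply H; lia).
  assert (f k <= g k) by (apply H; lia). lra.
Qed.

Lemma ssum_nonneg f k : (forall i, (i < k)%nat -> 0 <= f i) -> 0 <= ssum f k.
Proof.
  intros H. replace 0 with (ssum (fun _ => 0) k) by (clear H; induction k; simpl; lra).
  now apply ssum_le.
Qed.

Lemma ssum_plus f g k : ssum (fun i => f i + g i) k = ssum f k + ssum g k.
Proof. induction k; simpl; [lra|]. rewrite IHk; lra. Qed.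

Lemma ssum_minus f g k : ssum (fun i => f i - g i) k = ssum f k - ssum g k.
Proof. induction k; simpl; [lra|]. rewrite IHk; lra. Qed.

Lemma ssum_scal c f k : ssum (fun i => c * f i) k = c * ssum f k.
Proof. induction k; simpl; [lra|]. rewrite IHk; lra. Qed.

Lemma ssum_abs f k : Rabs (ssum f k) <= ssum (fun i => Rabs (f i)) k.
Proof.
  induction k; simpl; [rewrite Rabs_R0; lra|].
  eapply Rle_trans; [apply Rabs_triang | lra].
Qed.

Lemma ssum_stable f p : (forall i, (p <= i)%nat -> f i = 0) ->
  forall k, (p <= k)%nat -> ssum f k = ssum f p.
Proof.
  intros H k Hk. induction Hk as [|k Hk IH]; auto. simpl. rewrite IH, H by lia. lra.
Qed.

Lemma sum_f_R0_ssum f N : sum_f_R0 f N = ssum f (S N).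
Proof. induction N; simpl; [lra|]. rewrite IHN. simpl. lra. Qed.

Lemma ssum_geom k : ssum (fun i => (/2) ^ (S i)) k = 1 - (/2) ^ k.
Proof. induction k; [simpl; lra|]. cbn [ssum]. rewrite IHk. simpl. lra. Qed.

Lemma ssum_geom2 k : ssum (fun i => 2 ^ (S i)) k = 2 ^ (S k) - 2.
Proof. induction k; [simpl; lra|]. cbn [ssum]. rewrite IHk. simpl. lra. Qed.

Lemma Rabs_le_inv x e : Rabs x <= e -> - e <= x <= e.
Proof. unfold Rabs; destruct (Rcase_abs x); lra. Qed.

Lemma pow2_pos k : 0 < 2 ^ k.
Proof. apply pow_lt; lra. Qed.

Lemma powi2_pos k : 0 < (/2) ^ k.
Proof. apply pow_lt; lra. Qed.

Lemma pow2_powi2 k : 2 ^ k * (/ 2) ^ k = 1.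
Proof. rewrite <- Rpow_mult_distr, Rinv_r by lra. apply pow1. Qed.

Lemma pow2_S k : 2 ^ (S k) = 2 * 2 ^ k.
Proof. reflexivity. Qed.

Lemma powi2_S k : (/2) ^ k = 2 * (/2) ^ (S k).
Proof. simpl. field. Qed.

Lemma pow2_le a b : (a <= b)%nat -> 2 ^ a <= 2 ^ b.
Proof. intros; apply Rle_pow; lra || auto. Qed.

Lemma powi2_le a b : (a <= b)%nat -> (/2) ^ b <= (/2) ^ a.
Proof. induction 1; [lra|]. simpl. pose proof (powi2_pos m). lra. Qed.

Lemma pow2_lt_inv a b : 2 ^ a < 2 ^ b -> (a < b)%nat.
Proof.
  intros H. destruct (le_lt_dec b a) as [h|h]; auto. apply pow2_le in h. lra.
Qed.

Lemma INR_lt_pow2 k : INR k < 2 ^ k.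
Proof.
  induction k; [simpl; lra|]. rewrite S_INR. simpl.
  assert (1 <= 2 ^ k) by (apply pow_R1_Rle; lra). lra.
Qed.

Lemma up_bound t : t < INR (Z.to_nat (up t)) + 1.
Proof.
  destruct (archimed t) as [h1 _].
  destruct (Z_lt_le_dec (up t) 0).
  - assert (IZR (up t) < 0) by (apply IZR_lt; auto).
    pose proof (pos_INR (Z.to_nat (up t))). lra.
  - rewrite INR_IZR_INZ, Z2Nat.id by auto. lra.
Qed.

Lemma exists_pow2_gt t : exists K, t < 2 ^ K.
Proof.
  exists (S (Z.to_nat (up t))). pose proof (up_bound t).
  pose proof (INR_lt_pow2 (S (Z.to_nat (up t)))). rewrite S_INR in H0. lra.
Qed.

Lemma dyadic_block y : 1 <= y -> exists M, 2 ^ M <= y < 2 ^ (S M).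
Proof.
  intros hy. destruct (exists_pow2_gt y) as [k hk].
  induction k as [|k IH]; [simpl in hk; lra|].
  destruct (Rlt_le_dec y (2 ^ k)) as [h|h]; auto. exists k. auto.
Qed.

Lemma small_multiple A eps : 0 <= A -> 0 < eps ->
  exists N, forall j, (N <= j)%nat -> A * (/2) ^ j < eps.
Proof.
  intros hA he.
  assert (he' : 0 < eps / (A + 1)) by (apply Rdiv_lt_0_compat; lra).
  destruct (pow_lt_1_zero (/2) ltac:(rewrite Rabs_right; lra) _ he') as [N HN].
  exists N. intros j hj. specialize (HN j ltac:(lia)).
  rewrite Rabs_right in HN by (left; apply powi2_pos).
  pose proof (powi2_pos j).
  apply Rle_lt_trans with ((A + 1) * (/2) ^ j); [nra|].
  apply Rmult_lt_compat_l with (r := A + 1) in HN; [|lra].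
  replace ((A + 1) * (eps / (A + 1))) with eps in HN by (field; lra). exact HN.
Qed.

Lemma cdf_S_succ n t : cdf_S (S n) t =
  ssum (fun i => (/ 2) ^ (S i) * cdf_S n (t - 2 ^ (S i))) (S (Z.to_nat (up t))).
Proof. simpl cdf_S. apply sum_f_R0_ssum. Qed.

Lemma cdf_neg n t : t < 0 -> cdf_S n t = 0.
Proof.
  revert t; induction n as [|n IH]; intros t Ht.
  - simpl. destruct (Rle_dec 0 t); lra.
  - rewrite cdf_S_succ, (ssum_ext _ (fun _ => 0)).
    + clear. induction (S _); simpl; lra.
    + intros i _. rewrite IH; [ring|]. pose proof (pow2_pos (S i)). lra.
Qed.

Lemma cdf_S_trunc n t K : t < 2 ^ (S K) ->
  cdf_S (S n) t = ssum (fun i => (/ 2) ^ (S i) * cdf_S n (t - 2 ^ (S i))) K.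
Proof.
  intros HK. rewrite cdf_S_succ.
  set (p := Nat.min K (S (Z.to_nat (up t)))).
  assert (Hz : forall i, (p <= i)%nat -> (/ 2) ^ (S i) * cdf_S n (t - 2 ^ (S i)) = 0).
  { intros i Hi. rewrite cdf_neg; [ring|].
    destruct (Nat.le_ge_cases K (S (Z.to_nat (up t)))) as [h|h].
    - pose proof (pow2_le (S K) (S i) ltac:(unfold p in Hi; lia)). lra.
    - pose proof (INR_lt_pow2 (S i)). pose proof (up_bound t).
      assert (INR (S (Z.to_nat (up t))) <= INR (S i)) by (apply le_INR; unfold p in Hi; lia).
      rewrite S_INR in H1. lra. }
  rewrite (ssum_stable _ p Hz (S (Z.to_nat (up t)))) by (unfold p; lia).
  rewrite (ssum_stable _ p Hz K) by (unfold p; lia). reflexivity.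
Qed.

Lemma cdf_bounds n t : 0 <= cdf_S n t <= 1.
Proof.
  revert t; induction n as [|n IH]; intros t.
  - simpl. destruct (Rle_dec 0 t); lra.
  - destruct (exists_pow2_gt t) as [K HK].
    rewrite (cdf_S_trunc n t K) by (pose proof (pow2_le K (S K) ltac:(lia)); lra).
    split.
    + apply ssum_nonneg. intros i _. specialize (IH (t - 2 ^ S i)).
      pose proof (powi2_pos (S i)). nra.
    + apply Rle_trans with (ssum (fun i => (/2) ^ (S i)) K).
      * apply ssum_le. intros i _. specialize (IH (t - 2 ^ S i)).
        pose proof (powi2_pos (S i)). nra.
      * rewrite ssum_geom. pose proof (powi2_pos K). lra.
Qed.

Lemma cdf_mono n t s : t <= s -> cdf_S n t <= cdf_S n s.
Proof.
  revert t s; induction n as [|n IH]; intros t s Hts.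
  - simpl. destruct (Rle_dec 0 t); destruct (Rle_dec 0 s); lra.
  - destruct (exists_pow2_gt s) as [K HK].
    pose proof (pow2_le K (S K) ltac:(lia)).
    rewrite (cdf_S_trunc n t K), (cdf_S_trunc n s K) by lra.
    apply ssum_le. intros i _.
    assert (cdf_S n (t - 2 ^ S i) <= cdf_S n (s - 2 ^ S i)) by (apply IH; lra).
    pose proof (powi2_pos (S i)). nra.
Qed.

Lemma tail_bounds n t : 0 <= tail_S n t <= 1.
Proof. unfold tail_S. pose proof (cdf_bounds n t). lra. Qed.

Lemma tail_mono n t s : t <= s -> tail_S n s <= tail_S n t.
Proof. unfold tail_S. intros h. pose proof (cdf_mono n t s h). lra. Qed.

Lemma tail_neg n t : t < 0 -> tail_S n t = 1.
Proof. unfold tail_S. intros h. rewrite cdf_neg; auto; lra. Qed.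

Lemma tail_0 t : 0 <= t -> tail_S 0 t = 0.
Proof. unfold tail_S. simpl. destruct (Rle_dec 0 t); lra. Qed.

(** Renewal equation for the tail: conditioning on [X_{n+1} = 2^(i+1)], with
    the event [X_{n+1} > 2^K] (probability [2^-K]) forcing [S_{n+1} > t]. *)
Lemma tail_rec n t K : t < 2 ^ (S K) ->
  tail_S (S n) t =
  ssum (fun i => (/ 2) ^ (S i) * tail_S n (t - 2 ^ (S i))) K + (/ 2) ^ K.
Proof.
  intros HK. unfold tail_S. rewrite (cdf_S_trunc n t K HK).
  rewrite (ssum_ext (fun i => (/ 2) ^ S i * (1 - cdf_S n (t - 2 ^ S i)))
                    (fun i => (/ 2) ^ S i - (/ 2) ^ S i * cdf_S n (t - 2 ^ S i)))
    by (intros; ring).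
  rewrite ssum_minus, ssum_geom. lra.
Qed.

Lemma tail_geometric n : exists a, 1 <= a /\
  forall K s, 2 ^ K <= s -> tail_S n s <= a * (/ 2) ^ K.
Proof.
  induction n as [|n [a [Ha HT]]].
  - exists 1. split; [lra|]. intros K s Hs. rewrite tail_0.
    + pose proof (powi2_pos K); lra.
    + pose proof (pow2_pos K); lra.
  - exists (2 * a + 2). split; [lra|].
    intros K s Hs. apply Rle_trans with (tail_S (S n) (2 ^ K)); [now apply tail_mono|].
    destruct K as [|k]; [simpl; pose proof (tail_bounds (S n) 1); lra|].
    rewrite (tail_rec n _ (S k)) by (rewrite (pow2_S (S k)); pose proof (pow2_pos (S k)); lra).
    cbn [ssum]. replace (2 ^ S k - 2 ^ S k) with 0 by ring.
    assert (Hsum : ssum (fun i => (/ 2) ^ S i * tail_S n (2 ^ S k - 2 ^ S i)) k <=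
                   ssum (fun i => (a * (/2) ^ k) * (/ 2) ^ S i) k).
    { apply ssum_le. intros i Hi. rewrite Rmult_comm. apply Rmult_le_compat_r.
      - pose proof (powi2_pos (S i)); lra.
      - apply HT. pose proof (pow2_le (S i) k ltac:(lia)). rewrite pow2_S. lra. }
    rewrite ssum_scal, ssum_geom in Hsum.
    pose proof (tail_bounds n 0). pose proof (powi2_pos (S k)).
    pose proof (powi2_S k). nra.
Qed.

(** [P{S_(n+1) > t} > 0]: the last summand can exceed any level. *)
Lemma tail_pos n t : 0 < tail_S (S n) t.
Proof.
  destruct (exists_pow2_gt t) as [K HK].
  pose proof (pow2_le K (S K) ltac:(lia)).
  rewrite (tail_rec n t K) by lra.
  assert (0 <= ssum (fun i => (/ 2) ^ S i * tail_S n (t - 2 ^ S i)) K).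
  { apply ssum_nonneg. intros i _.
    pose proof (powi2_pos (S i)). pose proof (tail_bounds n (t - 2 ^ S i)). nra. }
  pose proof (powi2_pos K). lra.
Qed.

(** First-order expansion of the tail just above a power of two:
    for [0 <= r < 2^K],
      [P{S_(m+1) > 2^K + r} = (m+1) 2^-K (1 + P{S_m > r}) + O(4^-K)]
    (exactly one summand is large, and it exceeds [2^K], leaving [r] to the
    other [m] summands). *)
Definition first_order_expansion (m : nat) (C : R) : Prop :=
  forall K r, 0 <= r < 2 ^ K ->
  Rabs (tail_S (S m) (2 ^ K + r) - INR (S m) * (/2) ^ K * (1 + tail_S m r))
  <= C * ((/2) ^ K * (/2) ^ K).

Lemma first_order_expansion_0 : first_order_expansion 0 0.
Proof.
  intros K r Hr.
  rewrite (tail_rec 0 _ K) by (rewrite pow2_S; lra).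
  rewrite (ssum_ext _ (fun _ => 0)).
  - replace (ssum (fun _ => 0) K) with 0 by (clear; induction K; simpl; lra).
    rewrite tail_0 by lra.
    replace (0 + (/ 2) ^ K - INR 1 * (/ 2) ^ K * (1 + 0)) with 0 by (simpl; ring).
    rewrite Rabs_R0. lra.
  - intros i Hi. rewrite tail_0; [ring|]. pose proof (pow2_le (S i) K ltac:(lia)). lra.
Qed.

(** In the renewal equation for [P{S_(m+2) > 2^(k+1) + r}], the [i]-th
    summand ([X = 2^(i+1)], [i < k]) is [shifted_term]; its first-order
    prediction, obtained by expanding [P{S_(m+1) > 2^(k+1) + (r - 2^(i+1))}],
    is [predicted_term]. *)
Definition shifted_term (m k : nat) (r : R) (i : nat) : R :=
  (/2) ^ S i * tail_S (S m) (2 ^ S k + r - 2 ^ S i).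

Definition predicted_term (m k : nat) (r : R) (i : nat) : R :=
  INR (S m) * (/2) ^ S k * ((/2) ^ S i * (1 + tail_S m (r - 2 ^ S i))).

(** The
    predictions sum to [(m+1) 2^-(k+1) (1 + P{S_(m+1) > r})] by the renewal
    equation for [S_(m+1)]. *)
Lemma expansion_error_decomposition m k r : 0 <= r < 2 ^ S k ->
  tail_S (S (S m)) (2 ^ S k + r)
    - INR (S (S m)) * (/2) ^ S k * (1 + tail_S (S m) r)
  = ssum (fun i => shifted_term m k r i - predicted_term m k r i) k
    - 4 * INR (S m) * ((/2) ^ S k * (/2) ^ S k).
Proof.
  intros Hr. set (P := (/2) ^ S k).
  assert (E1 : tail_S (S (S m)) (2 ^ S k + r) =
               ssum (shifted_term m k r) k + P * tail_S (S m) r + P).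
  { rewrite (tail_rec (S m) _ (S k)) by (rewrite (pow2_S (S k)); lra).
    cbn [ssum]. replace (2 ^ S k + r - 2 ^ S k) with r by ring. reflexivity. }
  assert (E2 : tail_S (S m) r =
               ssum (fun i => (/2) ^ S i * tail_S m (r - 2 ^ S i)) k + 2 * P).
  { rewrite (tail_rec m r k), (powi2_S k) by lra. reflexivity. }
  assert (EB : ssum (predicted_term m k r) k =
               INR (S m) * P * ((1 - 2 * P) + (tail_S (S m) r - 2 * P))).
  { unfold predicted_term. rewrite ssum_scal.
    rewrite (ssum_ext (fun i => (/2) ^ S i * (1 + tail_S m (r - 2 ^ S i)))
                      (fun i => (/2) ^ S i + (/2) ^ S i * tail_S m (r - 2 ^ S i)))
      by (intros; ring).
    rewrite ssum_plus, ssum_geom, (powi2_S k), E2. fold P. ring. }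
  rewrite ssum_minus, EB, E1, S_INR. ring.
Qed.

Section ExpansionStep.

Variables (m : nat) (C a : R).
Hypothesis C_nonneg : 0 <= C.
Hypothesis a_ge1 : 1 <= a.
Hypothesis expansion_m : first_order_expansion m C.
Hypothesis tail_m : forall K s, 2 ^ K <= s -> tail_S m s <= a * (/ 2) ^ K.

(** If [X = 2^(i+1) <= r], the expansion at level [m] applies directly. *)
Lemma prediction_error_near k r i : 2 ^ S i <= r < 2 ^ S k ->
  Rabs (shifted_term m k r i - predicted_term m k r i)
  <= (/2) ^ S i * (C * ((/2) ^ S k * (/2) ^ S k)).
Proof.
  intros Hr. unfold shifted_term, predicted_term.
  pose proof (pow2_pos (S i)).
  pose proof (expansion_m (S k) (r - 2 ^ S i) ltac:(lra)) as E.
  replace (2 ^ S k + (r - 2 ^ S i)) with (2 ^ S k + r - 2 ^ S i) in E by ring.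
  replace ((/ 2) ^ S i * tail_S (S m) (2 ^ S k + r - 2 ^ S i)
           - INR (S m) * (/ 2) ^ S k * ((/ 2) ^ S i * (1 + tail_S m (r - 2 ^ S i))))
    with ((/ 2) ^ S i * (tail_S (S m) (2 ^ S k + r - 2 ^ S i)
           - INR (S m) * (/ 2) ^ S k * (1 + tail_S m (r - 2 ^ S i)))) by ring.
  pose proof (powi2_pos (S i)).
  rewrite Rabs_mult, (Rabs_right ((/2) ^ S i)) by lra.
  now apply Rmult_le_compat_l; [lra|].
Qed.

(** If [r < 2^(i+1)], the remaining sum exceeds [r' = 2^k + r - 2^(i+1)];
    unless [i+1 = k] this residual is at least [2^(k-1)], so its tail is
    [O(2^-k)] by the geometric bound. *)
Lemma far_residual_small k r i : (i < k)%nat -> 0 <= r < 2 ^ S i ->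
  (/2) ^ S i * tail_S m (2 ^ k + r - 2 ^ S i)
  <= 4 * a * (/2) ^ S i * (/2) ^ S k + 4 * 2 ^ S i * ((/2) ^ S k * (/2) ^ S k).
Proof.
  intros Hi Hr. set (P := (/2) ^ S k). set (r' := 2 ^ k + r - 2 ^ S i).
  assert (HP : 0 < P) by apply powi2_pos.
  pose proof (powi2_pos (S i)). pose proof (pow2_pos (S i)).
  pose proof (tail_bounds m r').
  destruct (Nat.eq_dec (S i) k) as [e|e].
  - subst k.
    assert (Hk : (/2) ^ S i = 2 * P) by apply powi2_S.
    assert (H2P : 2 ^ S i * P = / 2)
      by (pose proof (pow2_powi2 (S i)) as E; rewrite Hk in E;
          replace (2 ^ S i * (2 * P)) with (2 * (2 ^ S i * P)) in E by ring; lra).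
    assert (4 * 2 ^ S i * (P * P) = (/2) ^ S i) by
      (replace (4 * 2 ^ S i * (P * P)) with (4 * (2 ^ S i * P) * P) by ring;
       rewrite H2P, Hk; field).
    assert (0 <= 4 * a * (/2) ^ S i * P) by
      (rewrite Hk; assert (0 <= a * P * P) by (apply Rmult_le_pos; nra); lra).
    nra.
  - destruct k as [|k1]; [lia|].
    assert (Hk1 : 2 ^ k1 <= r') by
      (unfold r'; rewrite pow2_S; pose proof (pow2_le (S i) k1 ltac:(lia)); lra).
    assert (Hk1' : (/2) ^ k1 = 4 * P)
      by (unfold P; rewrite (powi2_S k1), (powi2_S (S k1)); ring).
    pose proof (tail_m k1 r' Hk1) as Ht. rewrite Hk1' in Ht.
    assert ((/2) ^ S i * tail_S m r' <= (/2) ^ S i * (a * (4 * P)))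
      by (apply Rmult_le_compat_l; lra).
    nra.
Qed.

(** If [r < 2^(i+1)], expand instead at level [k] around [2^k]. *)
Lemma prediction_error_far k r i : (i < k)%nat -> 0 <= r < 2 ^ S i ->
  Rabs (shifted_term m k r i - predicted_term m k r i)
  <= (/2) ^ S i * ((4 * C + 8 * INR (S m) * a) * ((/2) ^ S k * (/2) ^ S k))
     + 8 * INR (S m) * (/2) ^ S k * ((/2) ^ S k * (/2) ^ S k) * 2 ^ S i.
Proof.
  intros Hi Hr. unfold shifted_term, predicted_term.
  set (P := (/2) ^ S k). set (mm := INR (S m)). set (r' := 2 ^ k + r - 2 ^ S i).
  assert (Hmm : 1 <= mm) by (unfold mm; rewrite S_INR; pose proof (pos_INR m); lra).
  assert (HP : 0 < P) by apply powi2_pos.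
  assert (Hk : (/2) ^ k = 2 * P) by apply powi2_S.
  pose proof (powi2_pos (S i)) as Hu.
  pose proof (pow2_le (S i) k Hi).
  rewrite (tail_neg m (r - 2 ^ S i)) by lra.
  pose proof (expansion_m k r' ltac:(unfold r'; lra)) as E.
  replace (2 ^ k + r') with (2 ^ S k + r - 2 ^ S i) in E by (unfold r'; rewrite pow2_S; ring).
  fold mm in E. rewrite Hk in E.
  set (X := tail_S (S m) (2 ^ S k + r - 2 ^ S i)) in *.
  pose proof (far_residual_small k r i Hi Hr) as Hres. fold P r' in Hres.
  pose proof (tail_bounds m r').
  replace ((/ 2) ^ S i * X - mm * P * ((/ 2) ^ S i * (1 + 1)))
    with ((/ 2) ^ S i * (X - mm * (2 * P) * (1 + tail_S m r'))
          + 2 * mm * P * ((/2) ^ S i * tail_S m r')) by ring.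
  eapply Rle_trans; [apply Rabs_triang|].
  rewrite Rabs_mult, (Rabs_right ((/2) ^ S i)) by lra.
  rewrite (Rabs_right (2 * mm * P * _)) by (apply Rle_ge; apply Rmult_le_pos; nra).
  assert ((/ 2) ^ S i * Rabs (X - mm * (2 * P) * (1 + tail_S m r'))
          <= (/2) ^ S i * (C * (2 * P * (2 * P)))) by (apply Rmult_le_compat_l; lra).
  assert (2 * mm * P * ((/ 2) ^ S i * tail_S m r')
          <= 2 * mm * P * (4 * a * (/2) ^ S i * P + 4 * 2 ^ S i * (P * P)))
    by (apply Rmult_le_compat_l; nra).
  nra.
Qed.

Lemma prediction_error k r i : (i < k)%nat -> 0 <= r < 2 ^ S k ->
  Rabs (shifted_term m k r i - predicted_term m k r i)
  <= (/2) ^ S i * ((4 * C + 8 * INR (S m) * a) * ((/2) ^ S k * (/2) ^ S k))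
     + 8 * INR (S m) * (/2) ^ S k * ((/2) ^ S k * (/2) ^ S k) * 2 ^ S i.
Proof.
  intros Hi Hr.
  destruct (Rle_lt_dec (2 ^ S i) r) as [Hri|Hri].
  - eapply Rle_trans; [apply prediction_error_near; lra|].
    pose proof (powi2_pos (S i)). pose proof (powi2_pos (S k)). pose proof (pow2_pos (S i)).
    pose proof (pos_INR (S m)).
    assert (0 <= (/2) ^ S k * (/2) ^ S k) by nra.
    assert (C * ((/2) ^ S k * (/2) ^ S k)
            <= (4 * C + 8 * INR (S m) * a) * ((/2) ^ S k * (/2) ^ S k)).
    { apply Rmult_le_compat_r; [lra|].
      assert (0 <= INR (S m) * a) by (apply Rmult_le_pos; lra). lra. }
    assert (0 <= 8 * INR (S m) * (/2) ^ S k * ((/2) ^ S k * (/2) ^ S k) * 2 ^ S i).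
    { apply Rmult_le_pos; [|lra]. apply Rmult_le_pos; [|lra].
      apply Rmult_le_pos; [|lra]. lra. }
    assert ((/2) ^ S i * (C * ((/2) ^ S k * (/2) ^ S k)) <= (/2) ^ S i *
            ((4 * C + 8 * INR (S m) * a) * ((/2) ^ S k * (/2) ^ S k)))
      by (apply Rmult_le_compat_l; lra).
    lra.
  - apply prediction_error_far; [exact Hi | lra].
Qed.

Lemma first_order_expansion_step :
  first_order_expansion (S m) (4 * C + 8 * INR (S m) * a + 12 * INR (S m)).
Proof.
  intros K r Hr. set (mm := INR (S m)).
  assert (Hmm : 1 <= mm) by (unfold mm; rewrite S_INR; pose proof (pos_INR m); lra).
  destruct K as [|k].
  - simpl pow in *.
    rewrite (tail_rec (S m) _ 0), (tail_rec m r 0) by (simpl; lra). simpl ssum.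
    rewrite S_INR. fold mm. simpl pow.
    replace (0 + 1 - (mm + 1) * 1 * (1 + (0 + 1))) with (- (2 * mm + 1)) by ring.
    rewrite Rabs_Ropp, Rabs_right by lra. nra.
  - rewrite expansion_error_decomposition by lra.
    set (P := (/2) ^ S k). set (Q := P * P). set (D := 4 * C + 8 * mm * a).
    assert (HP : 0 < P) by apply powi2_pos.
    assert (HQ : 0 < Q) by (unfold Q; nra).
    assert (H2P : 2 ^ S k * P = 1) by apply pow2_powi2.
    assert (Hsum : ssum (fun i => Rabs (shifted_term m k r i - predicted_term m k r i)) k
                   <= D * Q + 8 * mm * Q).
    { eapply Rle_trans.
      - apply ssum_le with (g := fun i => (D * Q) * (/2) ^ S i + (8 * mm * P * Q) * 2 ^ S i).
        intros i Hi. pose proof (prediction_error k r i Hi Hr) as E.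
        fold mm P in E. unfold D, Q. lra.
      - rewrite ssum_plus, !ssum_scal, ssum_geom, ssum_geom2.
        pose proof (powi2_pos k).
        assert (0 <= D * Q) by (unfold D; apply Rmult_le_pos; nra).
        assert (8 * mm * P * Q * (2 ^ S k - 2) <= 8 * mm * Q).
        { replace (8 * mm * P * Q * (2 ^ S k - 2))
            with (8 * mm * Q * (2 ^ S k * P) - 16 * mm * P * Q) by ring.
          rewrite H2P. assert (0 <= mm * P * Q) by (apply Rmult_le_pos; [apply Rmult_le_pos|]; lra).
          lra. }
        nra. }
    eapply Rle_trans; [apply Rabs_triang|]. rewrite Rabs_Ropp.
    pose proof (ssum_abs (fun i => shifted_term m k r i - predicted_term m k r i) k) as Habs.
    cbv beta in Habs.
    fold mm P Q. rewrite (Rabs_right (4 * mm * Q)) by (apply Rle_ge; apply Rmult_le_pos; lra).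
    lra.
Qed.

End ExpansionStep.

Lemma first_order_expansion_exists m : exists C, 0 <= C /\ first_order_expansion m C.
Proof.
  induction m as [|m [C [HC HE]]].
  - exists 0. split; [lra | exact first_order_expansion_0].
  - destruct (tail_geometric m) as [a [Ha HT]].
    eexists. split; [|exact (first_order_expansion_step m C a HC Ha HE HT)].
    pose proof (pos_INR (S m)). nra.
Qed.

(** Normalization: [n = gamma_n n * 2^L] with [L = ceil(log2 n)], and in the
    dyadic block [2^M <= gamma_n n * x < 2^(M+1)] the level [n x] is
    [2^(M+L) + residual n x M] with [0 <= residual n x M < 2^(M+L)]. *)
Definition residual (n : nat) (x : R) (M : nat) : R :=
  2 ^ Nat.log2_up n * (gamma_n n * x - 2 ^ M).

Lemma gamma_facts n : (1 <= n)%nat ->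
  0 < gamma_n n /\ INR n = gamma_n n * 2 ^ Nat.log2_up n.
Proof.
  intros hn. unfold gamma_n.
  pose proof (pow2_pos (Nat.log2_up n)).
  assert (0 < INR n) by (apply lt_0_INR; lia).
  split; [apply Rdiv_lt_0_compat; lra | field; lra].
Qed.

Lemma residual_shift n x M : (1 <= n)%nat ->
  residual n x M = INR n * (x - 2 ^ M / gamma_n n).
Proof.
  intros hn. destruct (gamma_facts n hn) as [g0 g2].
  unfold residual. rewrite g2. field. lra.
Qed.

Lemma ln2_pos : 0 < ln 2.
Proof. rewrite <- ln_1. apply ln_increasing; lra. Qed.

Lemma Rpower2_log2 y : 0 < y -> Rpower 2 (log2 y) = y.
Proof.
  intros hy. unfold Rpower, log2. pose proof ln2_pos.
  replace (ln y / ln 2 * ln 2) with (ln y) by (field; lra). apply exp_ln; auto.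
Qed.

Lemma fr_block n x M : 2 ^ M <= gamma_n n * x < 2 ^ (S M) ->
  fr n x = log2 (gamma_n n * x) - INR M.
Proof.
  intros [h1 h2]. set (y := gamma_n n * x) in *.
  pose proof (pow2_pos M).
  pose proof ln2_pos.
  assert (Hlog : forall k, log2 (2 ^ k) = INR k)
    by (intros k; unfold log2; rewrite ln_pow by lra; field; lra).
  assert (Hmono : forall u v, 0 < u -> u <= v -> log2 u <= log2 v).
  { intros u v hu huv. unfold log2, Rdiv. apply Rmult_le_compat_r.
    - left. apply Rinv_0_lt_compat. lra.
    - destruct huv as [huv|<-]; [left; apply ln_increasing|]; lra. }
  assert (l1 : INR M <= log2 y) by (rewrite <- Hlog; apply Hmono; lra).
  assert (l3 : log2 y < INR M + 1).
  { rewrite <- S_INR, <- Hlog. unfold log2, Rdiv. apply Rmult_lt_compat_r.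
    - apply Rinv_0_lt_compat. lra.
    - apply ln_increasing; lra. }
  unfold fr, frac_part, Int_part. fold y.
  rewrite <- (tech_up (log2 y) (Z.of_nat (S M))); rewrite <- ?INR_IZR_INZ, ?S_INR.
  - rewrite minus_IZR, <- INR_IZR_INZ, S_INR. simpl. ring.
  - lra.
  - lra.
Qed.

Lemma normed_tail_block n x M : (1 <= n)%nat ->
  2 ^ M <= gamma_n n * x < 2 ^ (S M) ->
  normed_tail n x = tail_S n (INR n * x) * 2 ^ M / gamma_n n.
Proof.
  intros hn hM. destruct (gamma_facts n hn) as [g0 _].
  pose proof (pow2_pos M).
  assert (hy : 0 < gamma_n n * x) by lra.
  unfold normed_tail. rewrite (fr_block n x M hM).
  replace (- (log2 (gamma_n n * x) - INR M)) with (INR M + - log2 (gamma_n n * x)) by ring.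
  rewrite Rpower_plus, Rpower_Ropp, Rpower_pow, Rpower2_log2 by lra.
  field. split; [lra|]. intros ->. lra.
Qed.

Lemma normed_tail_expansion m : exists C, 0 <= C /\ forall x M,
  2 ^ M <= gamma_n (S m) * x < 2 ^ (S M) ->
  Rabs (normed_tail (S m) x - 1 - tail_S m (residual (S m) x M)) <= C * (/2) ^ M.
Proof.
  destruct (first_order_expansion_exists m) as [C [HC HE]]. exists C. split; auto.
  intros x M HM.
  destruct (gamma_facts (S m) ltac:(lia)) as [g0 g2].
  rewrite (normed_tail_block (S m) x M ltac:(lia) HM).
  set (L := Nat.log2_up (S m)) in *. set (K := (M + L)%nat).
  set (n := INR (S m)) in *. set (r := residual (S m) x M).
  assert (hn1 : 1 <= n) by (unfold n; apply (le_INR 1); lia).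
  assert (hKe : 2 ^ K = 2 ^ M * 2 ^ L) by (unfold K; apply pow_add).
  pose proof (pow2_pos L). pose proof (pow2_pos M). pose proof (pow2_pos K).
  assert (hnx : n * x = 2 ^ K + r) by (unfold r, residual; fold L; rewrite hKe, g2; ring).
  assert (hr : 0 <= r < 2 ^ K).
  { unfold r, residual. fold L. rewrite hKe. destruct HM as [h1 h2]. rewrite pow2_S in h2.
    split; nra. }
  specialize (HE K r hr). fold n in HE. rewrite <- hnx in HE.
  set (Tn := tail_S (S m) (n * x)) in *. set (Tm := tail_S m r) in *.
  pose proof (powi2_pos K).
  assert (hscale : 2 ^ M / gamma_n (S m) = 2 ^ K / n) by (rewrite hKe, g2; field; lra).
  replace (Tn * 2 ^ M / gamma_n (S m)) with (Tn * (2 ^ K / n))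
    by (rewrite <- hscale; unfold Rdiv; ring).
  replace (Tn * (2 ^ K / n) - 1 - Tm)
    with ((Tn - n * (/ 2) ^ K * (1 + Tm)) * (2 ^ K / n))
    by (rewrite pow_inv; field; lra).
  assert (0 < 2 ^ K / n) by (apply Rdiv_lt_0_compat; lra).
  rewrite Rabs_mult, (Rabs_right (2 ^ K / n)) by lra.
  apply Rle_trans with (C * ((/ 2) ^ K * (/ 2) ^ K) * (2 ^ K / n));
    [apply Rmult_le_compat_r; lra|].
  replace (C * ((/ 2) ^ K * (/ 2) ^ K) * (2 ^ K / n)) with (C * (/ 2) ^ K / n)
    by (rewrite pow_inv; field; lra).
  pose proof (powi2_le M K ltac:(unfold K; lia)).
  apply Rle_trans with (C * (/ 2) ^ K); [|apply Rmult_le_compat_l; lra].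
  apply Rmult_le_reg_r with n; [lra|].
  unfold Rdiv. rewrite Rmult_assoc, Rinv_l by lra.
  assert (0 <= C * (/ 2) ^ K) by (apply Rmult_le_pos; lra). nra.
Qed.

(** Part (i).  If [fr n x >= delta] then [gamma_n x >= 2^M 2^delta] in block
    [M], so the residual is at least [2^M (2^delta - 1)], which is at least
    [2^(M-p)] as soon as [2^-p <= 2^delta - 1]. *)
Lemma residual_off_boundary n x M delta p : (1 <= n)%nat -> (p <= M)%nat ->
  2 ^ M <= gamma_n n * x < 2 ^ (S M) -> delta <= fr n x ->
  (/2) ^ p <= Rpower 2 delta - 1 ->
  2 ^ (M - p) <= residual n x M.
Proof.
  intros hn hp hM hfr hdelta.
  destruct (gamma_facts n hn) as [g0 _].
  pose proof (pow2_pos M). pose proof (pow2_pos (Nat.log2_up n)).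
  rewrite (fr_block n x M hM) in hfr.
  assert (hy : 2 ^ M * Rpower 2 delta <= gamma_n n * x).
  { rewrite <- (Rpower2_log2 (gamma_n n * x)) by lra.
    rewrite <- (Rpower_pow M 2), <- Rpower_plus by lra.
    apply Rle_Rpower; lra. }
  assert (h2 : 2 ^ (M - p) = 2 ^ M * (/2) ^ p).
  { replace M with (M - p + p)%nat at 2 by lia.
    rewrite pow_add, Rmult_assoc, pow2_powi2. ring. }
  assert (1 <= 2 ^ Nat.log2_up n) by (apply pow_R1_Rle; lra).
  assert (2 ^ M * (/2) ^ p <= 2 ^ M * (Rpower 2 delta - 1))
    by (apply Rmult_le_compat_l; lra).
  unfold residual. nra.
Qed.

Lemma normed_tail_off_boundary m delta eps : 0 < delta -> 0 < eps ->
  exists X, forall x, X < x -> delta <= fr (S m) x ->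
  Rabs (normed_tail (S m) x - 1) < eps.
Proof.
  intros hd he.
  destruct (normed_tail_expansion m) as [C [HC HE]].
  destruct (tail_geometric m) as [a [Ha Ht]].
  destruct (gamma_facts (S m) ltac:(lia)) as [g0 _].
  assert (heta : 0 < Rpower 2 delta - 1).
  { pose proof (Rpower_lt 2 0 delta ltac:(lra) hd). rewrite Rpower_O in H by lra. lra. }
  destruct (small_multiple 1 _ ltac:(lra) heta) as [p Hp]. specialize (Hp p (le_n p)).
  destruct (small_multiple (C + a) eps ltac:(lra) he) as [N HN].
  exists (2 ^ (N + p) / gamma_n (S m)). intros x hx hfr.
  assert (hy : 2 ^ (N + p) < gamma_n (S m) * x).
  { apply Rmult_lt_compat_l with (r := gamma_n (S m)) in hx; auto.
    replace (gamma_n (S m) * (2 ^ (N + p) / gamma_n (S m))) with (2 ^ (N + p)) in hx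
      by (field; lra). exact hx. }
  destruct (dyadic_block (gamma_n (S m) * x)) as [M hM].
  { pose proof (pow2_le 0 (N + p) ltac:(lia)). simpl in H. lra. }
  assert (hMN : (N + p <= M)%nat) by (apply Nat.lt_succ_r, pow2_lt_inv; lra).
  pose proof (residual_off_boundary (S m) x M delta p ltac:(lia) ltac:(lia) hM hfr
                ltac:(lra)) as hr.
  specialize (Ht _ _ hr). specialize (HE x M hM). specialize (HN (M - p)%nat ltac:(lia)).
  pose proof (powi2_le (M - p) M ltac:(lia)).
  pose proof (tail_bounds m (residual (S m) x M)).
  assert (C * (/2) ^ M <= C * (/2) ^ (M - p)) by (apply Rmult_le_compat_l; lra).
  replace (normed_tail (S m) x - 1) with
    ((normed_tail (S m) x - 1 - tail_S m (residual (S m) x M)) + tail_S m (residual (S m) x M))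
    by ring.
  eapply Rle_lt_trans; [apply Rabs_triang|].
  rewrite (Rabs_right (tail_S m _)) by lra. lra.
Qed.

Lemma lub_near (E : R -> Prop) V d e0 : E e0 -> V - d <= e0 ->
  (forall y, E y -> y <= V + d) -> exists s, is_lub E s /\ Rabs (s - V) <= d.
Proof.
  intros He0 Hlow Hup.
  destruct (completeness E) as [s [hs1 hs2]]; [exists (V + d); exact Hup | now exists e0|].
  exists s. split; [split; auto|].
  assert (s <= V + d) by (apply hs2; exact Hup).
  assert (e0 <= s) by (apply hs1; auto).
  apply Rabs_le. lra.
Qed.

(** On [2^M/gamma_n + c <= x < 2^(M+1)/gamma_n] the residual is
    [n (x - 2^M/gamma_n) >= n c], with equality at the left end point; by
    monotonicity of the tail the supremum is [1 + P{S_m > n c} + O(2^-M)]. *)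
Lemma normed_tail_sup_limit m c eps : 0 <= c -> 0 < eps ->
  exists N, forall M, (N <= M)%nat ->
  exists s,
    is_lub (fun y => exists x, 2 ^ M / gamma_n (S m) + c <= x /\
                       x < 2 ^ (S M) / gamma_n (S m) /\ y = normed_tail (S m) x) s
    /\ Rabs (s - (1 + tail_S m (INR (S m) * c))) < eps.
Proof.
  intros hc he.
  destruct (normed_tail_expansion m) as [C [HC HE]].
  destruct (gamma_facts (S m) ltac:(lia)) as [g0 _].
  set (g := gamma_n (S m)) in *. set (n := INR (S m)).
  assert (hn : 0 < n) by (apply lt_0_INR; lia).
  destruct (small_multiple C eps HC he) as [N0 HN0].
  destruct (exists_pow2_gt (g * c)) as [Kc hKc].
  exists (N0 + Kc)%nat. intros M hM.
  pose proof (pow2_pos M). pose proof (pow2_le Kc M ltac:(lia)).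
  assert (hscale : forall x, g * x = 2 ^ M + g * (x - 2 ^ M / g)) by (intros; field; lra).
  assert (Hblock : forall x, 2 ^ M / g + c <= x < 2 ^ (S M) / g ->
                   2 ^ M <= g * x < 2 ^ (S M)).
  { intros x [h1 h2]. rewrite hscale. split.
    - assert (0 <= g * (x - 2 ^ M / g)) by (apply Rmult_le_pos; lra). lra.
    - apply Rmult_lt_compat_l with (r := g) in h2; auto.
      replace (g * (2 ^ S M / g)) with (2 ^ S M) in h2 by (field; lra).
      rewrite <- hscale. lra. }
  set (x0 := 2 ^ M / g + c).
  assert (hx0 : 2 ^ M / g + c <= x0 < 2 ^ (S M) / g).
  { split; [unfold x0; lra|]. apply Rmult_lt_reg_l with g; auto.
    replace (g * (2 ^ S M / g)) with (2 * 2 ^ M) by (simpl; field; lra).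
    unfold x0. replace (g * (2 ^ M / g + c)) with (2 ^ M + g * c) by (field; lra). lra. }
  specialize (HN0 M ltac:(lia)).
  destruct (lub_near (fun y => exists x, 2 ^ M / g + c <= x /\
                        x < 2 ^ (S M) / g /\ y = normed_tail (S m) x)
                     (1 + tail_S m (n * c)) (C * (/2) ^ M) (normed_tail (S m) x0))
    as [s [Hs Hsv]].
  - exists x0. destruct hx0. auto.
  - pose proof (HE x0 M (Hblock x0 hx0)) as E0.
    rewrite residual_shift in E0 by lia. fold g n in E0.
    replace (x0 - 2 ^ M / g) with c in E0 by (unfold x0; ring).
    apply Rabs_le_inv in E0. lra.
  - intros y [x [h1 [h2 ->]]].
    pose proof (HE x M (Hblock x (conj h1 h2))) as E.
    rewrite residual_shift in E by lia. fold g n in E.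
    assert (n * c <= n * (x - 2 ^ M / g)) by (apply Rmult_le_compat_l; lra).
    pose proof (tail_mono m _ _ H1).
    apply Rabs_le_inv in E. lra.
  - exists s. split; [exact Hs | lra].
Qed.

Theorem theorem2 (n : nat) (hn : (2 <= n)%nat) :
  (* (i) *)
  (forall delta : R, 0 < delta ->
     forall eps : R, 0 < eps ->
     exists M : R, forall x : R, M < x -> delta <= fr n x ->
       Rabs (normed_tail n x - 1) < eps)
  /\
  (* (ii) *)
  (forall c : R, 1 < c ->
     1 + tail_S (n - 1) (INR n * c) > 1 /\
     forall eps : R, 0 < eps ->
     exists N : nat, forall m : nat, (1 <= m)%nat -> (N <= m)%nat ->
       exists s : R,
         is_lub (fun y => exists x : R,
                    2 ^ m / gamma_n n + c <= x /\ x < 2 ^ (S m) / gamma_n n /\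
                    y = normed_tail n x) s
         /\ Rabs (s - (1 + tail_S (n - 1) (INR n * c))) < eps).
Proof.
  destruct n as [|[|k]]; [lia|lia|].
  replace (S (S k) - 1)%nat with (S k) by lia.
  split.
  - intros delta hd eps he. exact (normed_tail_off_boundary (S k) delta eps hd he).
  - intros c hc. split.
    + pose proof (tail_pos k (INR (S (S k)) * c)). lra.
    + intros eps he.
      destruct (normed_tail_sup_limit (S k) c eps ltac:(lra) he) as [N HN].
      exists N. intros M _ hM. exact (HN M hM).
Qed.
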